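(* In the discrete torus model with frame group $\mathbb{Z}_2\times\mathbb{Z}_2$ and the 2-dimensional calculus $\mathcal C=\{\overline{10},\overline{01}\}$ (context), the torsion-free and cotorsion-free spin connections are exactly \[A_{\overline{10}}=a\,e_1-\tfrac{s_2}{2}e_2,\qquad A_{\overline{01}}=-\tfrac{s_1}{2}e_1+b\,e_2\] for arbitrary functions $a,b$, where $s_1=\bar\partial^2\Theta_1$, $s_2=\bar\partial^1\Theta_2$. The covariant derivative is $\nabla e_1=2a\,e_1\otimes e_1-s_2\,e_2\otimes e_1$, $\nabla e_2=-s_1\,e_1\otimes e_2+2b\,e_2\otimes e_2$, and such a connection is regular if and only if $a\,\bar\partial^1b-b\,\bar\partial^2a=0$ (equivalently $aR_1b-bR_2a=0$).
   Context: Discrete torus model: $\Sigma=\mathbb{Z}_2\times\mathbb{Z}_2$, $x\to y$ iff $y-x\in\{(1,0),(0,1)\}$; diagonal zweibein $e_{1,x,x+(1,0)}=\Theta_1(x)^{-1}$, $e_{2,x,x+(0,1)}=\Theta_2(x)^{-1}$, $\Theta_a$ nowhere-vanishing with $\Theta_1R_1\Theta_2=\Theta_2R_2\Theta_1$; $R_1f(x)=f(x+(1,0))$, $R_2f(x)=f(x+(0,1))$, $\bar\partial^a=R_a-\mathrm{id}$; $e_af=R_a(f)e_a$, $\mathrm{d}f=\sum_a(\bar\partial^af)\Theta_ae_a$; two-forms $e_1\wedge e_2=-e_2\wedge e_1$, $e_a\wedge e_a=0$; $\mathrm{d}e_1=(\bar\partial^1\Theta_2)e_1\wedge e_2$, $\mathrm{d}e_2=-(\bar\partial^2\Theta_1)e_1\wedge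 e_2$. Frame group $\mathbb{Z}_2\times\mathbb{Z}_2=\{\overline{00},\overline{10},\overline{01},\overline{11}\}$ with calculus $\mathcal C=\{\overline{10},\overline{01}\}$, $f^{\overline{10}}\triangleright e_1=-2e_1$, $f^{\overline{10}}\triangleright e_2=0$, $f^{\overline{01}}\triangleright e_1=0$, $f^{\overline{01}}\triangleright e_2=-2e_2$. Spin connection: 1-forms $A_{\overline{10}},A_{\overline{01}}$. Torsion-free: $\mathrm{d}e_a+\sum_iA_i\wedge(f^i\triangleright e_a)=0$; cotorsion-free: $\mathrm{d}e_a+\sum_i(f^i\triangleright e_a)\wedge A_i=0$; regular: $A_{\overline{10}}\wedge A_{\overline{01}}+A_{\overline{01}}\wedge A_{\overline{10}}=0$. Covariant derivative $\nabla(\sum\alpha^ae_a)=\sum\mathrm{d}\alpha^a\otimes e_a-\sum_{i,a}\alpha^aA_i\otimes f^i\triangleright e_a$. *)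

From HB Require Import structures.
From mathcomp Require Import all_boot all_order all_algebra.
Set Implicit Arguments. Unset Strict Implicit. Unset Printing Implicit Defensive.
Import GRing.Theory.
Local Open Scope ring_scope.

Definition Sigma : Type := ('Z_2 * 'Z_2)%type.

Inductive dir := D1 | D2.

Section Model.
Variable K : fieldType.

Definition fn := Sigma -> K.

Definition Rsh (a : dir) (f : fn) : fn :=
  match a with
  | D1 => fun x => f (x.1 + 1, x.2)
  | D2 => fun x => f (x.1, x.2 + 1)
  end.

Definition dbar (a : dir) (f : fn) : fn := fun x => Rsh a f x - f x.

(* One-forms, written uniquely as sum_a alpha^a e_a (coefficients on the left). *)
Definition oneform := dir -> fn.
(* Two-forms: multiples f e_1 /\ e_2. *)
Definition twoform := fn.
(* Elements of Omega^1 (x) Omega^1: sum_{c,b} T c b e_c (x) e_b. *)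
Definition tensor := dir -> dir -> fn.

Definition e (a : dir) : oneform :=
  fun b _ => match a, b with D1, D1 | D2, D2 => 1 | _, _ => 0 end.

Definition lmul (f : fn) (w : oneform) : oneform := fun b x => f x * w b x.

(* wedge product, using e_a f = R_a(f) e_a, e_a/\e_a = 0, e_2/\e_1 = -e_1/\e_2 *)
Definition wedge (w v : oneform) : twoform :=
  fun x => w D1 x * Rsh D1 (v D2) x - w D2 x * Rsh D2 (v D1) x.

(* tensor product over the algebra, using e_c f = R_c(f) e_c *)
Definition tens (w v : oneform) : tensor :=
  fun c b x => w c x * Rsh c (v b) x.

Definition dfun (Theta : dir -> fn) (f : fn) : oneform :=
  fun a x => dbar a f x * Theta a x.

Definition de (Theta : dir -> fn) (a : dir) : twoform :=
  match a with
  | D1 => dbar D1 (Theta D2)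
  | D2 => fun x => - dbar D2 (Theta D1) x
  end.

Inductive calc := C10 | C01.

(* f^i |> e_a = act i a * e_a *)
Definition act (i : calc) (a : dir) : K :=
  match i, a with C10, D1 | C01, D2 => -2 | _, _ => 0 end.

Definition act_form (i : calc) (a : dir) : oneform :=
  fun b x => act i a * e a b x.

Definition connection := calc -> oneform.

Definition torsion_free (Theta : dir -> fn) (A : connection) : Prop :=
  forall a x, de Theta a x + wedge (A C10) (act_form C10 a) x
                           + wedge (A C01) (act_form C01 a) x = 0.

Definition cotorsion_free (Theta : dir -> fn) (A : connection) : Prop :=
  forall a x, de Theta a x + wedge (act_form C10 a) (A C10) x
                           + wedge (act_form C01 a) (A C01) x = 0.

Definition regular (A : connection) : Prop :=
  forall x, wedge (A C10) (A C01) x + wedge (A C01) (A C10) x = 0.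

(* nabla (sum_a alpha^a e_a) = sum_a d alpha^a (x) e_a
                              - sum_{i,a} alpha^a A_i (x) (f^i |> e_a) *)
Definition nabla (Theta : dir -> fn) (A : connection) (w : oneform) : tensor :=
  fun c b x =>
    (tens (dfun Theta (w D1)) (e D1) c b x + tens (dfun Theta (w D2)) (e D2) c b x)
    - (tens (lmul (w D1) (A C10)) (act_form C10 D1) c b x
       + tens (lmul (w D2) (A C10)) (act_form C10 D2) c b x
       + tens (lmul (w D1) (A C01)) (act_form C01 D1) c b x
       + tens (lmul (w D2) (A C01)) (act_form C01 D2) c b x).

Definition mkform (f g : fn) : oneform :=
  fun b => match b with D1 => f | D2 => g end.

Definition spin_conn (Theta : dir -> fn) (a b : fn) : connection :=
  fun i => match i with
  | C10 => mkform a (fun x => - dbar D1 (Theta D2) x / 2)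
  | C01 => mkform (fun x => - dbar D2 (Theta D1) x / 2) b
  end.

End Model.

(* Since 'Z_2 has period two, each shift R_a is an involution, so that
   R_a (dbar^a f) = - dbar^a f.  The basis one-form e_a spans a
   one-dimensional f^i-eigenspace, hence torsion-freeness only constrains the
   off-diagonal coefficients, 2 A_10^2 = - s_2 and 2 A_01^1 = - s_1; the
   cotorsion of a connection is minus the R_a-shift of its torsion, so
   cotorsion-freeness comes for free.  The covariant derivative and the
   regularity form are then direct computations, the s_1 s_2 terms of the two
   wedges cancelling by the same involution. *)
From HB Require Import structures.
From mathcomp Require Import all_boot all_order all_algebra.
From mathcomp Require Import ring.
Import GRing.Theory.
Local Open Scope ring_scope.

Lemma addZ2_11 (z : 'Z_2) : z + 1 + 1 = z.
Proof. by case: z => [[|[|m]]] //= Hm; apply: val_inj. Qed.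

Section TorusConnections.

Variables (K : fieldType) (Theta : dir -> fn K).

Lemma Rsh_involutive (a : dir) (f : fn K) (x : Sigma) :
  Rsh a (Rsh a f) x = f x.
Proof. by case: a; rewrite /= addZ2_11; case: x. Qed.

Lemma Rsh_dbar (a : dir) (f : fn K) (x : Sigma) :
  Rsh a (dbar a f) x = - dbar a f x.
Proof.
have -> : Rsh a (dbar a f) x = Rsh a (Rsh a f) x - Rsh a f x by case: a.
by rewrite Rsh_involutive opprB.
Qed.

Definition torsion (A : connection K) (a : dir) : twoform K :=
  fun x => de Theta a x + wedge (A C10) (@act_form K C10 a) x
                        + wedge (A C01) (@act_form K C01 a) x.

Definition cotorsion (A : connection K) (a : dir) : twoform K :=
  fun x => de Theta a x + wedge (@act_form K C10 a) (A C10) x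
                        + wedge (@act_form K C01 a) (A C01) x.

Lemma torsion_D1 (A : connection K) (x : Sigma) :
  torsion A D1 x = A C10 D2 x * 2 + dbar D1 (Theta D2) x.
Proof. by rewrite /torsion /wedge /act_form /=; ring. Qed.

Lemma torsion_D2 (A : connection K) (x : Sigma) :
  torsion A D2 x = - (A C01 D1 x * 2 + dbar D2 (Theta D1) x).
Proof. by rewrite /torsion /wedge /act_form /=; ring. Qed.

Lemma cotorsion_Rsh_torsion (A : connection K) (a : dir) (x : Sigma) :
  cotorsion A a x = - Rsh a (torsion A a) x.
Proof.
case: a.
  rewrite -[Rsh D1 _ x]/(torsion A D1 (x.1 + 1, x.2)) torsion_D1.
  rewrite -[dbar D1 _ (_, _)]/(Rsh D1 (dbar D1 (Theta D2)) x) Rsh_dbar.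
  by rewrite /cotorsion /wedge /act_form /=; ring.
rewrite -[Rsh D2 _ x]/(torsion A D2 (x.1, x.2 + 1)) torsion_D2.
rewrite -[dbar D2 _ (_, _)]/(Rsh D2 (dbar D2 (Theta D1)) x) Rsh_dbar.
by rewrite /cotorsion /wedge /act_form /=; ring.
Qed.

Lemma torsion_free_cotorsion_free (A : connection K) :
  torsion_free Theta A -> cotorsion_free Theta A.
Proof.
move=> T a x; have T' : forall a y, torsion A a y = 0 := T.
rewrite -/(cotorsion A a x) cotorsion_Rsh_torsion.
case: a; [rewrite -[Rsh _ _ x]/(torsion A D1 (x.1 + 1, x.2))
         | rewrite -[Rsh _ _ x]/(torsion A D2 (x.1, x.2 + 1))].
all: by rewrite T' oppr0.
Qed.

Lemma torsion_freeE (A : connection K) :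
  torsion_free Theta A <->
  forall x, A C10 D2 x * 2 + dbar D1 (Theta D2) x = 0
         /\ A C01 D1 x * 2 + dbar D2 (Theta D1) x = 0.
Proof.
split=> [T x | T [] x]; last 2 first.
- by rewrite -/(torsion A D1 x) torsion_D1 (T x).1.
- by rewrite -/(torsion A D2 x) torsion_D2 (T x).2 oppr0.
have [T1 T2] : torsion A D1 x = 0 /\ torsion A D2 x = 0 by split; apply: T.
by rewrite torsion_D1 in T1; move/eqP: T2; rewrite torsion_D2 oppr_eq0 => /eqP.
Qed.

Hypothesis two_neq0 : (2 : K) != 0.

Lemma torsion_free_spin_conn (A : connection K) :
  torsion_free Theta A <->
  exists a b : fn K, forall i d x, A i d x = spin_conn Theta a b i d x.
Proof.
rewrite torsion_freeE; split=> [T | [a [b Ab]] x].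
  exists (A C10 D1), (A C01 D2); case=> [] [] x //=; have [T1 T2] := T x;
    apply: (mulIf two_neq0); rewrite mulfVK //;
    by apply/eqP; rewrite -subr_eq0 opprK ?T1 ?T2.
by rewrite !Ab /= !mulfVK // !addNr.
Qed.

Variables a b : fn K.
Let A := spin_conn Theta a b.

Lemma nabla_spin_conn_e1 (c d : dir) (x : Sigma) :
  nabla Theta A (e K D1) c d x
  = 2 * a x * tens (e K D1) (e K D1) c d x
    - dbar D1 (Theta D2) x * tens (e K D2) (e K D1) c d x.
Proof.
by case: c; case: d; rewrite /nabla /tens /dfun /lmul /act_form /A /= /dbar /=;
  field.
Qed.

Lemma nabla_spin_conn_e2 (c d : dir) (x : Sigma) :
  nabla Theta A (e K D2) c d x
  = - dbar D2 (Theta D1) x * tens (e K D1) (e K D2) c d x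
    + 2 * b x * tens (e K D2) (e K D2) c d x.
Proof.
by case: c; case: d; rewrite /nabla /tens /dfun /lmul /act_form /A /= /dbar /=;
  field.
Qed.

Lemma regular_spin_connE (x : Sigma) :
  wedge (A C10) (A C01) x + wedge (A C01) (A C10) x
  = a x * Rsh D1 b x - b x * Rsh D2 a x.
Proof.
rewrite /wedge /A /=.
rewrite -[dbar D1 _ (_ + 1, _)]/(Rsh D1 (dbar D1 (Theta D2)) x).
rewrite -[dbar D2 _ (_, _ + 1)]/(Rsh D2 (dbar D2 (Theta D1)) x) !Rsh_dbar.
by field.
Qed.

End TorusConnections.

Theorem proposition4p11 (K : fieldType) (Theta : dir -> fn K)
  (H2 : (2 : K) != 0)
  (Hnz : forall a x, Theta a x != 0)
  (Hcomp : forall x, Theta D1 x * Rsh D1 (Theta D2) x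
                     = Theta D2 x * Rsh D2 (Theta D1) x) :
  let s1 := dbar D2 (Theta D1) in
  let s2 := dbar D1 (Theta D2) in
  (forall A : connection K,
     (torsion_free Theta A /\ cotorsion_free Theta A) <->
     (exists a b : fn K, forall i d x, A i d x = spin_conn Theta a b i d x))
  /\
  (forall a b : fn K,
     let A := spin_conn Theta a b in
     (forall c d x, nabla Theta A (e K D1) c d x
        = 2 * a x * tens (e K D1) (e K D1) c d x
          - s2 x * tens (e K D2) (e K D1) c d x)
     /\ (forall c d x, nabla Theta A (e K D2) c d x
        = - s1 x * tens (e K D1) (e K D2) c d x
          + 2 * b x * tens (e K D2) (e K D2) c d x)
     /\ (regular A <-> forall x, a x * dbar D1 b x - b x * dbar D2 a x = 0)
     /\ (regular A <-> forall x, a x * Rsh D1 b x - b x * Rsh D2 a x = 0)).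
Proof.
move=> s1 s2; split=> [A | a b A].
  rewrite -torsion_free_spin_conn //; split=> [[] // | T].
  by split; last exact: torsion_free_cotorsion_free.
have dbar_form x : a x * dbar D1 b x - b x * dbar D2 a x
                   = a x * Rsh D1 b x - b x * Rsh D2 a x by rewrite /dbar; ring.
have regularE : regular A <-> forall x, a x * Rsh D1 b x - b x * Rsh D2 a x = 0.
  have wedgeE := @regular_spin_connE K Theta H2 a b.
  by split=> R x; [rewrite -wedgeE | rewrite wedgeE].
split; first exact: nabla_spin_conn_e1.
split; first exact: nabla_spin_conn_e2.
by split=> //; rewrite regularE; split=> R x; rewrite ?dbar_form // -dbar_form.
Qed.
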